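(* Let $T_{23}=\mathbf{e}^1_1\otimes(\mathbf{e}^2_1\otimes\mathbf{e}^3_1+\mathbf{e}^2_2\otimes\mathbf{e}^3_2+\mathbf{e}^2_3\otimes\mathbf{e}^3_3)+\mathbf{e}^1_2\otimes(\mathbf{e}^2_1\otimes\mathbf{e}^3_2+\mathbf{e}^2_2\otimes\mathbf{e}^3_3+\mathbf{e}^2_3\otimes\mathbf{e}^3_4)\in\mathbb{C}^2\otimes\mathbb{C}^3\otimes\mathbb{C}^4$ (a tensor of rank $4$). Put $\psi(\mathbf{a},\mathbf{b},\mathbf{c})=a_1b_1c_1+a_1b_2c_2+a_1b_3c_3+a_2b_3c_4$ and $\Delta(\mathbf{c})=-c_2^2c_3^2+4c_1c_3^3+4c_2^3c_4-18c_1c_2c_3c_4+27c_1^2c_4^2$. Then a rank-one tensor $P=\mathbf{a}\otimes\mathbf{b}\otimes\mathbf{c}$ lies in the decomposition locus of $T_{23}$ if and only if \[ b_2^2-b_1b_3=0,\quad a_2b_2-a_1b_3=0,\quad a_2b_1-a_1b_2=0,\quad \psi(\mathbf{a},\mathbf{b},\mathbf{c})\neq0,\quad \Delta(\mathbf{c})\neq 0. \]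
   Context: $\mathbf{e}^i_j$ is the $j$-th standard basis vector of the $i$-th factor and $\mathbf{a}=(a_1,a_2)$, $\mathbf{b}=(b_1,b_2,b_3)$, $\mathbf{c}=(c_1,\dots,c_4)$ are nonzero coordinate vectors. The rank of a tensor is the minimal number of rank-one tensors summing to it; $P$ is in the decomposition locus of $T$ if $\mathrm{rk}(T-\lambda P)=\mathrm{rk}(T)-1$ for some $\lambda\in\mathbb{C}$. *)

From mathcomp Require Import all_boot all_algebra.
From mathcomp Require Import Rstruct complex.
Set Implicit Arguments. Unset Strict Implicit. Unset Printing Implicit Defensive.
Import GRing.Theory.
Local Open Scope ring_scope.

Definition C : numClosedFieldType := (Rdefinitions.R)[i].

(* Vectors of C^n as coordinate functions ('I_n = {0,..,n-1}, so the
   paper's index j corresponds to the ordinal j-1). *)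
Definition vec (n : nat) := 'I_n -> C.

Definition tensor := 'I_2 -> 'I_3 -> 'I_4 -> C.

Definition outer (a : vec 2) (b : vec 3) (c : vec 4) : tensor :=
  fun i j k => a i * b j * c k.

Definition tadd (T S : tensor) : tensor := fun i j k => T i j k + S i j k.
Definition tscale (l : C) (T : tensor) : tensor := fun i j k => l * T i j k.
Definition tsub (T S : tensor) : tensor := tadd T (tscale (-1) S).

Definition ebasis (n : nat) (j : 'I_n) : vec n := fun i => (i == j)%:R.

Definition nonzero_vec n (v : vec n) : Prop := exists i, v i != 0.

Definition rank_le (T : tensor) (r : nat) : Prop :=
  exists (a : 'I_r -> vec 2) (b : 'I_r -> vec 3) (c : 'I_r -> vec 4),
    forall i j k, T i j k = \sum_(l < r) outer (a l) (b l) (c l) i j k.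

Definition has_rank (T : tensor) (r : nat) : Prop :=
  rank_le T r /\ forall s, rank_le T s -> (r <= s)%N.

Definition in_decomp_locus (T P : tensor) : Prop :=
  exists (lambda : C) (r : nat),
    has_rank T r /\ (0 < r)%N /\ has_rank (tsub T (tscale lambda P)) r.-1.

Definition e1 (j : nat) : 'I_2 := inord j.
Definition e2 (j : nat) : 'I_3 := inord j.
Definition e3 (j : nat) : 'I_4 := inord j.

Definition T23 : tensor :=
  fun i j k =>
      outer (ebasis (e1 0)) (ebasis (e2 0)) (ebasis (e3 0)) i j k
    + outer (ebasis (e1 0)) (ebasis (e2 1)) (ebasis (e3 1)) i j k
    + outer (ebasis (e1 0)) (ebasis (e2 2)) (ebasis (e3 2)) i j k
    + outer (ebasis (e1 1)) (ebasis (e2 0)) (ebasis (e3 1)) i j k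
    + outer (ebasis (e1 1)) (ebasis (e2 1)) (ebasis (e3 2)) i j k
    + outer (ebasis (e1 1)) (ebasis (e2 2)) (ebasis (e3 3)) i j k.

Definition psi (a : vec 2) (b : vec 3) (c : vec 4) : C :=
  a (e1 0) * b (e2 0) * c (e3 0) + a (e1 0) * b (e2 1) * c (e3 1)
  + a (e1 0) * b (e2 2) * c (e3 2) + a (e1 1) * b (e2 2) * c (e3 3).

Definition Delta (c : vec 4) : C :=
  let c1 := c (e3 0) in let c2 := c (e3 1) in
  let c3 := c (e3 2) in let c4 := c (e3 3) in
  - (c2 ^+ 2 * c3 ^+ 2) + 4 * c1 * c3 ^+ 3 + 4 * c2 ^+ 3 * c4
  - 18 * c1 * c2 * c3 * c4 + 27 * c1 ^+ 2 * c4 ^+ 2.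

From mathcomp Require Import all_boot all_algebra.
From mathcomp Require Import Rstruct complex.
From mathcomp Require Import ring.
Set Implicit Arguments. Unset Strict Implicit. Unset Printing Implicit Defensive.
Import GRing.Theory Num.Theory.
Local Open Scope ring_scope.

(* T23 is the Hankel tensor [T_ijk = [i + j = k]]: the structure tensor of the
   multiplication of binary forms of degrees 1 and 2.  Its third flattening is
   injective, so every decomposition has at least four terms, and Lagrange
   interpolation at four distinct points of P^1 gives one with exactly four.
   In a four-term decomposition the matrix of third factors is invertible, and
   contracting T23 with a row y of its inverse gives y_(i+j) = a_i b_j: each such
   row lies on the twisted cubic, y = kappa (mu^3, mu^2 nu, mu nu^2, nu^3), at
   four pairwise distinct points (mu : nu).  Hence a rank-one term lambda a b c
   of such a decomposition has (a, b) on the Veronese curve, c proportional to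
   the binary cubic vanishing at the three other points (so Delta c != 0, Delta
   being its discriminant), and psi a b c = 1 / lambda.  Conversely Delta c != 0
   splits c into three distinct linear factors, and interpolation at their
   roots and at the point of a writes T23 - lambda P as three rank-one terms. *)

Notation i0 := (@ord0 1).
Notation i1 := (@Ordinal 2 1 isT).
Notation j0 := (@ord0 2).
Notation j1 := (@Ordinal 3 1 isT).
Notation j2 := (@Ordinal 3 2 isT).
Notation k0 := (@ord0 3).
Notation k1 := (@Ordinal 4 1 isT).
Notation k2 := (@Ordinal 4 2 isT).
Notation k3 := (@Ordinal 4 3 isT).

Lemma e10 : e1 0 = i0. Proof. exact: (inord_val i0). Qed.
Lemma e11 : e1 1 = i1. Proof. exact: (inord_val i1). Qed.
Lemma e20 : e2 0 = j0. Proof. exact: (inord_val j0). Qed.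
Lemma e21 : e2 1 = j1. Proof. exact: (inord_val j1). Qed.
Lemma e22 : e2 2 = j2. Proof. exact: (inord_val j2). Qed.
Lemma e30 : e3 0 = k0. Proof. exact: (inord_val k0). Qed.
Lemma e31 : e3 1 = k1. Proof. exact: (inord_val k1). Qed.
Lemma e32 : e3 2 = k2. Proof. exact: (inord_val k2). Qed.
Lemma e33 : e3 3 = k3. Proof. exact: (inord_val k3). Qed.
Definition eE := (e10, e11, e20, e21, e22, e30, e31, e32, e33).

Lemma ord2P (i : 'I_2) : i = i0 \/ i = i1.
Proof. by case: i => [[|[|//]] ?]; [left | right]; apply: val_inj. Qed.

Lemma ord3P (j : 'I_3) : [\/ j = j0, j = j1 | j = j2].
Proof.
by case: j => [[|[|[|//]]] ?]; [apply: Or31 | apply: Or32 | apply: Or33]; apply: val_inj.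
Qed.

Lemma ord4P (k : 'I_4) : [\/ k = k0, k = k1, k = k2 | k = k3].
Proof.
case: k => [[|[|[|[|//]]]] ?];
  [apply: Or41 | apply: Or42 | apply: Or43 | apply: Or44]; exact: val_inj.
Qed.

Lemma sum3 (F : 'I_3 -> C) : \sum_(j < 3) F j = F j0 + F j1 + F j2.
Proof.
rewrite !big_ord_recl big_ord0 addr0 !addrA.
by congr (_ + F _ + F _); apply: val_inj.
Qed.

Lemma sum4 (F : 'I_4 -> C) : \sum_(k < 4) F k = F k0 + F k1 + F k2 + F k3.
Proof.
rewrite !big_ord_recl big_ord0 addr0 !addrA.
by congr (_ + F _ + F _ + F _); apply: val_inj.
Qed.

Lemma T23E i j k : T23 i j k = ((i + j)%N == k)%:R.
Proof.
rewrite /T23 !eE /outer /ebasis.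
by case: (ord2P i) => ->; case: (ord3P j) => ->; case: (ord4P k) => -> /=; ring.
Qed.

Definition decomp (T : tensor) {s} (A : 'I_s -> vec 2) (B : 'I_s -> vec 3)
    (Cf : 'I_s -> vec 4) :=
  forall i j k, T i j k = \sum_(l < s) outer (A l) (B l) (Cf l) i j k.

Definition cons_fam {X s} (x : X) (f : 'I_s -> X) : 'I_s.+1 -> X :=
  fun l => if unlift ord0 l is Some l' then f l' else x.

Lemma rank_le_sub_decomp (T : tensor) (lam : C) a b c s :
  rank_le (tsub T (tscale lam (outer a b c))) s ->
  exists A B Cf, [/\ decomp T (s := s.+1) A B Cf,
    A ord0 = (fun i => lam * a i), B ord0 = b & Cf ord0 = c].
Proof.
case=> A [B [Cf decT]].
exists (cons_fam (fun i => lam * a i) A), (cons_fam b B), (cons_fam c Cf).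
split; rewrite /cons_fam ?unlift_none // => i j k.
rewrite big_ord_recl /= unlift_none.
under eq_bigr do rewrite liftK.
rewrite -decT /tsub /tadd /tscale /outer; ring.
Qed.

Definition fam3 {X} (x0 x1 x2 : X) : 'I_3 -> X :=
  fun l => nth x0 [:: x0; x1; x2] l.
Definition fam4 {X} (x0 x1 x2 x3 : X) : 'I_4 -> X :=
  fun l => nth x0 [:: x0; x1; x2; x3] l.

Lemma rank_le3 T a0 b0 c0 a1 b1 c1 a2 b2 c2 :
  (forall i j k, T i j k =
     outer a0 b0 c0 i j k + outer a1 b1 c1 i j k + outer a2 b2 c2 i j k) ->
  rank_le T 3.
Proof.
move=> decT; exists (fam3 a0 a1 a2), (fam3 b0 b1 b2), (fam3 c0 c1 c2).
by move=> i j k; rewrite decT sum3.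
Qed.

Lemma rank_le4 T a0 b0 c0 a1 b1 c1 a2 b2 c2 a3 b3 c3 :
  (forall i j k, T i j k = outer a0 b0 c0 i j k + outer a1 b1 c1 i j k
     + outer a2 b2 c2 i j k + outer a3 b3 c3 i j k) ->
  rank_le T 4.
Proof.
move=> decT; exists (fam4 a0 a1 a2 a3), (fam4 b0 b1 b2 b3), (fam4 c0 c1 c2 c3).
by move=> i j k; rewrite decT sum4.
Qed.

(** * Binary forms and the twisted cubic *)

Definition det2 (m n mu nu : C) := m * nu - n * mu.

Definition ver1 (mu nu : C) : vec 2 := fun i => nth 0 [:: mu; nu] i.
Definition ver2 (mu nu : C) : vec 3 :=
  fun j => nth 0 [:: mu ^+ 2; mu * nu; nu ^+ 2] j.
Definition ver3 (mu nu : C) : vec 4 :=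
  fun k => nth 0 [:: mu ^+ 3; mu ^+ 2 * nu; mu * nu ^+ 2; nu ^+ 3] k.

Definition vdot (y z : vec 4) := \sum_(k < 4) y k * z k.

(* Coefficients of the binary cubic [prod_i det2 m_i n_i mu nu], in the
   basis dual to the monomials [ver3 mu nu]. *)
Definition cubic3 (m1 n1 m2 n2 m3 n3 : C) : vec 4 := fun k =>
  nth 0 [:: - (n1 * n2 * n3); m1 * n2 * n3 + n1 * m2 * n3 + n1 * n2 * m3;
            - (m1 * m2 * n3 + m1 * n2 * m3 + n1 * m2 * m3); m1 * m2 * m3] k.

(* Pairs to 1 with [ver3 mu nu] and to 0 with each [ver3 m_i n_i]. *)
Definition lagrange3 (m1 n1 m2 n2 m3 n3 mu nu : C) : vec 4 := fun k =>
  cubic3 m1 n1 m2 n2 m3 n3 k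
  / (det2 m1 n1 mu nu * det2 m2 n2 mu nu * det2 m3 n3 mu nu).

Lemma det2C m n m' n' : det2 m' n' m n = - det2 m n m' n'.
Proof. rewrite /det2; ring. Qed.

Lemma det2C_neq0 m n m' n' : det2 m n m' n' != 0 -> det2 m' n' m n != 0.
Proof. by rewrite det2C oppr_eq0. Qed.

Lemma det2xx m n : det2 m n m n = 0.
Proof. rewrite /det2; ring. Qed.

Lemma vdotZl (y z w : vec 4) ka :
  (forall k, y k = ka * z k) -> vdot y w = ka * vdot z w.
Proof. by move=> yE; rewrite /vdot mulr_sumr; apply: eq_bigr => k _; rewrite yE mulrA. Qed.

Lemma vdotBr (y z w : vec 4) g :
  vdot y (fun k => z k - g * w k) = vdot y z - g * vdot y w.
Proof. rewrite /vdot !sum4; ring. Qed.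

Lemma vdot_ver3_cubic3 mu nu m1 n1 m2 n2 m3 n3 :
  vdot (ver3 mu nu) (cubic3 m1 n1 m2 n2 m3 n3) =
  det2 m1 n1 mu nu * det2 m2 n2 mu nu * det2 m3 n3 mu nu.
Proof. rewrite /vdot sum4 /ver3 /cubic3 /det2 /=; ring. Qed.

Lemma Delta_cubic3 g m1 n1 m2 n2 m3 n3 :
  Delta (fun k => g * cubic3 m1 n1 m2 n2 m3 n3 k) =
  - g ^+ 4 * (det2 m1 n1 m2 n2 * det2 m1 n1 m3 n3 * det2 m2 n2 m3 n3) ^+ 2.
Proof. rewrite /Delta !eE /cubic3 /det2 /=; ring. Qed.

Lemma ver1E (a : vec 2) i : a i = ver1 (a i0) (a i1) i.
Proof. by case: (ord2P i) => ->. Qed.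

Lemma ver12E mu nu (i : 'I_2) (j : 'I_3) (k : 'I_4) : (i + j)%N = k ->
  ver1 mu nu i * ver2 mu nu j = ver3 mu nu k.
Proof.
case: (ord2P i) => ->; case: (ord3P j) => ->;
  case: (ord4P k) => -> //= _; rewrite /ver1 /ver2 /ver3 /=; ring.
Qed.

Lemma minors_ver2 (a0 a1 : C) (b : vec 3) : (a0 != 0) || (a1 != 0) ->
  a1 * b j1 = a0 * b j2 -> a1 * b j0 = a0 * b j1 ->
  exists ka, forall j, b j = ka * ver2 a0 a1 j.
Proof.
move=> /orP[a0n | a1n] m12 m01.
- exists (b j0 / a0 ^+ 2) => j.
  have b1E : b j1 = a1 * b j0 / a0 by rewrite m01; field.
  have b2E : b j2 = a1 * b j1 / a0 by rewrite m12; field.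
  by case: (ord3P j) => ->; rewrite /ver2 /= ?b2E ?b1E; field.
- exists (b j2 / a1 ^+ 2) => j.
  have b1E : b j1 = a0 * b j2 / a1 by rewrite -m12; field.
  have b0E : b j0 = a0 * b j1 / a1 by rewrite -m01; field.
  by case: (ord3P j) => ->; rewrite /ver2 /= ?b0E ?b1E; field.
Qed.

Lemma ord4_split (k : 'I_4) : exists (i : 'I_2) (j : 'I_3), (i + j)%N = k.
Proof.
by case: (ord4P k) => ->; [exists i0, j0 | exists i0, j1 | exists i0, j2 | exists i1, j2].
Qed.

Lemma hankel_ver3 (y : vec 4) (a : vec 2) (b : vec 3) :
  (forall (i : 'I_2) (j : 'I_3) (k : 'I_4), (i + j)%N = k -> y k = a i * b j) ->
  exists mu nu ka, ((mu != 0) || (nu != 0)) /\ forall k, y k = ka * ver3 mu nu k.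
Proof.
move=> yE; have [a_nz | a0] := boolP ((a i0 != 0) || (a i1 != 0)).
  have [ka bE] : exists ka, forall j, b j = ka * ver2 (a i0) (a i1) j.
    apply: minors_ver2 => //.
    - by rewrite -(yE i1 j1 k2) // -(yE i0 j2 k2).
    - by rewrite -(yE i1 j0 k1) // -(yE i0 j1 k1).
  exists (a i0), (a i1), ka; split=> // k; have [i [j ijk]] := ord4_split k.
  by rewrite (yE i j k) // bE (ver1E a i) -(ver12E _ _ ijk) mulrCA.
have aE i : a i = 0.
  by move: a0; rewrite negb_or !negbK => /andP[/eqP ? /eqP ?]; case: (ord2P i) => ->.
exists 1, 0, 0; split=> [|k]; first by rewrite oner_neq0.
by have [i [j ijk]] := ord4_split k; rewrite (yE i j k) // aE !mul0r.
Qed.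

Lemma ver3_det2_eq0 mu nu mu' nu' : (mu != 0) || (nu != 0) ->
  det2 mu nu mu' nu' = 0 -> exists t, forall k, ver3 mu' nu' k = t * ver3 mu nu k.
Proof.
move=> /orP[mu_n | nu_n] /eqP; rewrite /det2 subr_eq0 => /eqP d.
- have nu'E : nu' = nu * mu' / mu by apply: (mulfI mu_n); rewrite d; field.
  by exists ((mu' / mu) ^+ 3) => k; case: (ord4P k) => ->; rewrite /ver3 /= ?nu'E; field.
- have mu'E : mu' = mu * nu' / nu by apply: (mulfI nu_n); rewrite -d; field.
  by exists ((nu' / nu) ^+ 3) => k; case: (ord4P k) => ->; rewrite /ver3 /= ?mu'E; field.
Qed.

Lemma eq_Delta (c c' : vec 4) : (forall k, c k = c' k) -> Delta c = Delta c'.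
Proof. by move=> cE; rewrite /Delta !cE. Qed.

Lemma closed_poly_root (F : closedFieldType) n (c : nat -> F) : c n.+1 != 0 ->
  exists r, \sum_(i < n.+2) c i * r ^+ i = 0.
Proof.
move=> cn; have [r rE] := @solve_monicpoly F n.+1 (fun i => - c i / c n.+1) isT.
by exists r; rewrite big_ord_recr /= rE mulr_sumr -big_split big1 // => i _ /=; field.
Qed.

Lemma Delta_neq0_cubic3 (c : vec 4) : Delta c != 0 ->
  exists g m1 n1 m2 n2 m3 n3, forall k, c k = g * cubic3 m1 n1 m2 n2 m3 n3 k.
Proof.
have root2 (x0 x1 x2 : C) : x2 != 0 -> exists r, x0 + x1 * r + x2 * r ^+ 2 = 0.
  move=> x2n; have [r rE] := @closed_poly_root _ 1 (nth 0 [:: x0; x1; x2]) x2n.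
  by exists r; rewrite -[RHS]rE sum3 /=; ring.
have root3 (x0 x1 x2 x3 : C) : x3 != 0 ->
    exists r, x0 + x1 * r + x2 * r ^+ 2 + x3 * r ^+ 3 = 0.
  move=> x3n; have [r rE] := @closed_poly_root _ 2 (nth 0 [:: x0; x1; x2; x3]) x3n.
  by exists r; rewrite -[RHS]rE sum4 /=; ring.
rewrite /Delta !eE; set c0 := c k0; set c1 := c k1; set c2 := c k2; set c3 := c k3.
move=> Dn; have [c3z | c3n] := eqVneq c3 0.
  have c2n : c2 != 0 by apply: contraNneq Dn => c2z; rewrite c2z c3z; apply/eqP; ring.
  have [r1 r1E] := root2 c0 c1 c2 c2n.
  (* one root of the binary cubic is at infinity, the point (0 : -1) *)
  exists c2, 1, r1, 1, (- c1 / c2 - r1), 0, (-1) => k.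
  case: (ord4P k) => ->; rewrite /cubic3 /= -/c0 -/c1 -/c2 -/c3 ?c3z; try by field.
  apply/eqP; rewrite -subr_eq0; apply/eqP.
  by transitivity (c0 + c1 * r1 + c2 * r1 ^+ 2); first field.
have [r1 r1E] := root3 c0 c1 c2 c3 c3n.
(* the cubic is c3 (x - r1) (x^2 + e1 x + e0) *)
set e1 := c2 / c3 + r1; set e0 := c1 / c3 + r1 * e1.
have [r2 r2E] := root2 e0 e1 1 (oner_neq0 C).
exists c3, 1, r1, 1, r2, 1, (- e1 - r2) => k.
case: (ord4P k) => ->; rewrite /cubic3 /= -/c0 -/c1 -/c2 -/c3; try by rewrite /e1; field.
- apply/eqP; rewrite -subr_eq0; apply/eqP.
  transitivity ((c0 + c1 * r1 + c2 * r1 ^+ 2 + c3 * r1 ^+ 3)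
                - c3 * r1 * (e0 + e1 * r2 + 1 * r2 ^+ 2)).
    by rewrite /e0 /e1; field.
  by rewrite r1E r2E; ring.
- apply/eqP; rewrite -subr_eq0; apply/eqP.
  transitivity (c3 * (e0 + e1 * r2 + 1 * r2 ^+ 2)); first by rewrite /e0 /e1; field.
  by rewrite r2E mulr0.
Qed.

(** * The rank of T23 *)

Lemma T23_lagrange m0 n0 m1 n1 m2 n2 m3 n3 :
  det2 m0 n0 m1 n1 != 0 -> det2 m0 n0 m2 n2 != 0 -> det2 m0 n0 m3 n3 != 0 ->
  det2 m1 n1 m2 n2 != 0 -> det2 m1 n1 m3 n3 != 0 -> det2 m2 n2 m3 n3 != 0 ->
  forall i j k, T23 i j k =
    outer (ver1 m0 n0) (ver2 m0 n0) (lagrange3 m1 n1 m2 n2 m3 n3 m0 n0) i j k +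
    outer (ver1 m1 n1) (ver2 m1 n1) (lagrange3 m0 n0 m2 n2 m3 n3 m1 n1) i j k +
    outer (ver1 m2 n2) (ver2 m2 n2) (lagrange3 m0 n0 m1 n1 m3 n3 m2 n2) i j k +
    outer (ver1 m3 n3) (ver2 m3 n3) (lagrange3 m0 n0 m1 n1 m2 n2 m3 n3) i j k.
Proof.
move=> d01 d02 d03 d12 d13 d23.
have := det2C_neq0 d01; have := det2C_neq0 d02; have := det2C_neq0 d03.
have := det2C_neq0 d12; have := det2C_neq0 d13; have := det2C_neq0 d23.
move: d01 d02 d03 d12 d13 d23; rewrite /det2.
move=> d01 d02 d03 d12 d13 d23 d32 d31 d21 d30 d20 d10 i j k.
rewrite T23E /outer /ver1 /ver2 /lagrange3 /cubic3 /det2.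
case: (ord2P i) => ->; case: (ord3P j) => ->; case: (ord4P k) => -> /=.
all: by field; rewrite d01 d02 d03 d12 d13 d23 d10 d20 d30 d21 d31 d32.
Qed.

Lemma rank_le_T23 : rank_le T23 4.
Proof.
apply: rank_le4; apply: (@T23_lagrange 1 0 0 1 1 1 1 2);
  rewrite /det2 !(mul0r, mulr0, mul1r, mulr1, subr0, sub0r) ?oppr_eq0 ?oner_eq0 //.
  by rewrite pnatr_eq0.
by rewrite -natr1 addrK oner_eq0.
Qed.

Definition cmx {s} (Cf : 'I_s -> vec 4) : 'M[C]_(4, s) := \matrix_(k, l) Cf l k.

Section Flattening.

Variables (s : nat) (A : 'I_s -> vec 2) (B : 'I_s -> vec 3) (Cf : 'I_s -> vec 4).
Hypothesis decT : decomp T23 A B Cf.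

Lemma contract_T23 (x : 'rV[C]_4) i j :
  \sum_(k < 4) x 0 k * T23 i j k =
  \sum_(l < s) A l i * B l j * (x *m cmx Cf) 0 l.
Proof.
under eq_bigr do rewrite decT mulr_sumr.
rewrite exchange_big /=; apply: eq_bigr => l _.
rewrite !mxE mulr_sumr; apply: eq_bigr => k _; rewrite /outer mxE; ring.
Qed.

Lemma cmx_row_free : row_free (cmx Cf).
Proof.
apply: inj_row_free => x x0; apply/rowP => k; rewrite mxE.
have xT i j : \sum_(k < 4) x 0 k * T23 i j k = 0.
  by rewrite contract_T23 x0 big1 // => l _; rewrite mxE mulr0.
have := xT i0 j0; have := xT i0 j1; have := xT i0 j2; have := xT i1 j2.
rewrite !sum4 !T23E /= => x3 x2 x1 x0'.
by case: (ord4P k) => ->; [rewrite -x0' | rewrite -x1 | rewrite -x2 | rewrite -x3]; ring.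
Qed.

Lemma decomp_T23_size : (4 <= s)%N.
Proof. by rewrite -(eqP cmx_row_free) rank_leq_col. Qed.

End Flattening.

Lemma has_rank_T23 : has_rank T23 4.
Proof. by split=> [|s [A [B [Cf decT]]]]; [exact: rank_le_T23 | exact: decomp_T23_size decT]. Qed.

Lemma has_rank_T23_eq r : has_rank T23 r -> r = 4%N.
Proof.
case=> rkT minT; apply/eqP; rewrite eqn_leq (minT _ rank_le_T23).
by case: has_rank_T23 => _ /(_ r rkT).
Qed.

(** * Four-term decompositions of T23 *)

Lemma unitmx_annihilated_eq0 (R : comUnitRingType) n (Y : 'M[R]_n) (d : 'I_n -> R) :
  Y \in unitmx -> (forall m, \sum_k Y m k * d k = 0) -> forall k, d k = 0.
Proof.
move=> Yu Yd k; pose D := \col_k d k.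
have YD : Y *m D = 0.
  by apply/colP => m; rewrite !mxE -[RHS](Yd m); apply: eq_bigr => k' _; rewrite mxE.
have := congr1 (mulmx (invmx Y)) YD.
by rewrite mulmxA mulVmx // mul1mx mulmx0 => /colP/(_ k); rewrite !mxE.
Qed.

Lemma sum_delta (R : nzSemiRingType) n (F : 'I_n -> R) m : \sum_(l < n) F l * (m == l)%:R = F m.
Proof.
rewrite (bigD1 m) //= eqxx mulr1 big1 ?addr0 // => l lm.
by rewrite eq_sym (negbTE lm) mulr0.
Qed.

Definition dual_row (Cf : 'I_4 -> vec 4) m : vec 4 := fun k => invmx (cmx Cf) m k.

Section FourTermDecomposition.

Variables (A : 'I_4 -> vec 2) (B : 'I_4 -> vec 3) (Cf : 'I_4 -> vec 4).
Hypothesis decT : decomp T23 A B Cf.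

Let cmx_unit : cmx Cf \in unitmx.
Proof. by rewrite -row_free_unit (cmx_row_free decT). Qed.

Lemma vdot_dual_row m l : vdot (dual_row Cf m) (Cf l) = (m == l)%:R.
Proof.
have /matrixP/(_ m l) := mulVmx cmx_unit; rewrite !mxE => <-.
by apply: eq_bigr => k _; rewrite mxE.
Qed.

Lemma dual_row_hankel m (i : 'I_2) (j : 'I_3) (k : 'I_4) :
  (i + j)%N = k -> dual_row Cf m k = A m i * B m j.
Proof.
move=> ijk; transitivity (\sum_(k' < 4) row m (invmx (cmx Cf)) 0 k' * T23 i j k').
  rewrite -[LHS](sum_delta (fun k' => invmx (cmx Cf) m k')).
  by apply: eq_bigr => k' _; rewrite T23E ijk mxE.
rewrite (contract_T23 decT) -row_mul mulVmx //.
rewrite -[RHS](sum_delta (fun l => A l i * B l j) m).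
by apply: eq_bigr => l _; rewrite !mxE.
Qed.

Lemma dual_row_ver3 m :
  exists mu nu ka, ((mu != 0) || (nu != 0)) /\ forall k, dual_row Cf m k = ka * ver3 mu nu k.
Proof. exact: hankel_ver3 (dual_row_hankel m). Qed.

Lemma dual_row_scale_neq0 m ka (z : vec 4) :
  (forall k, dual_row Cf m k = ka * z k) -> ka != 0.
Proof.
move=> yE; apply/eqP => ka0; have := vdot_dual_row m m.
by rewrite eqxx (vdotZl _ yE) ka0 mul0r /= => /eqP; rewrite eq_sym oner_eq0.
Qed.

Lemma dual_rows_det2_neq0 m l mu nu ka mu' nu' ka' : m != l ->
  (mu != 0) || (nu != 0) ->
  (forall k, dual_row Cf m k = ka * ver3 mu nu k) ->
  (forall k, dual_row Cf l k = ka' * ver3 mu' nu' k) ->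
  det2 mu nu mu' nu' != 0.
Proof.
move=> ml nz yE y'E; apply/eqP => /(ver3_det2_eq0 nz) [t tE].
have y'yE k : ka * dual_row Cf l k = ka' * t * dual_row Cf m k.
  by rewrite y'E yE tE; ring.
have : ka * vdot (dual_row Cf l) (Cf l) = ka' * t * vdot (dual_row Cf m) (Cf l).
  by rewrite /vdot !mulr_sumr; apply: eq_bigr => k _; rewrite !mulrA y'yE.
rewrite !vdot_dual_row eqxx (negbTE ml) /= mulr1 mulr0.
by apply/eqP; apply: dual_row_scale_neq0 yE.
Qed.

Lemma dual_rows_ver3 : exists mu nu ka : 'I_4 -> C, forall m,
  ((mu m != 0) || (nu m != 0)) /\
  forall k, dual_row Cf m k = ka m * ver3 (mu m) (nu m) k.
Proof.
have [mu0 [nu0 [ka0 h0]]] := dual_row_ver3 k0.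
have [mu1 [nu1 [ka1 h1]]] := dual_row_ver3 k1.
have [mu2 [nu2 [ka2 h2]]] := dual_row_ver3 k2.
have [mu3 [nu3 [ka3 h3]]] := dual_row_ver3 k3.
exists (fam4 mu0 mu1 mu2 mu3), (fam4 nu0 nu1 nu2 nu3), (fam4 ka0 ka1 ka2 ka3).
by move=> m; case: (ord4P m) => ->.
Qed.

Lemma Delta_first_factor_neq0 : Delta (Cf k0) != 0.
Proof.
have [mu [nu [ka rowsE]]] := dual_rows_ver3.
have dn m l : m != l -> det2 (mu m) (nu m) (mu l) (nu l) != 0.
  move=> ml; have [nz yE] := rowsE m; have [_ y'E] := rowsE l.
  exact: dual_rows_det2_neq0 ml nz yE y'E.
set q := cubic3 (mu k1) (nu k1) (mu k2) (nu k2) (mu k3) (nu k3).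
have vq m : vdot (dual_row Cf m) q = ka m * (det2 (mu k1) (nu k1) (mu m) (nu m)
    * det2 (mu k2) (nu k2) (mu m) (nu m) * det2 (mu k3) (nu k3) (mu m) (nu m)).
  by case: (rowsE m) => _ yE; rewrite (vdotZl _ yE) vdot_ver3_cubic3.
have q0n : vdot (dual_row Cf k0) q != 0.
  have [_ /dual_row_scale_neq0 ka0n] := rowsE k0.
  by rewrite vq !mulf_neq0 // dn.
(* [q] vanishes at the points of the dual rows 1, 2, 3; [g] normalizes it
   against row 0, so [Cf k0 - g q] is annihilated by all dual rows. *)
pose g := (vdot (dual_row Cf k0) q)^-1.
have Cf0E k : Cf k0 k = g * q k.
  apply/eqP; rewrite -subr_eq0; apply/eqP; move: k.
  apply: (@unitmx_annihilated_eq0 _ _ (invmx (cmx Cf))); first by rewrite unitmx_inv.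
  move=> m; change (vdot (dual_row Cf m) (fun k => Cf k0 k - g * q k) = 0).
  rewrite vdotBr vdot_dual_row; case: (ord4P m) => ->; first by rewrite mulVf ?subrr.
  1-3: by rewrite vq det2xx !(mulr0, mul0r) subrr.
rewrite (eq_Delta Cf0E) Delta_cubic3 mulf_neq0 ?oppr_eq0 ?expf_neq0 ?invr_eq0 //.
by rewrite !mulf_neq0 ?dn.
Qed.

Lemma decomp_T23_first_term :
  [/\ A k0 i1 * B k0 j1 = A k0 i0 * B k0 j2, A k0 i1 * B k0 j0 = A k0 i0 * B k0 j1,
      psi (A k0) (B k0) (Cf k0) = 1 & Delta (Cf k0) != 0].
Proof.
have yE := dual_row_hankel k0.
split; last exact: Delta_first_factor_neq0.
- by rewrite -(yE i1 j1 k2) // -(yE i0 j2 k2).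
- by rewrite -(yE i1 j0 k1) // -(yE i0 j1 k1).
- have := vdot_dual_row k0 k0; rewrite /vdot sum4 /psi !eE.
  by rewrite (yE i0 j0 k0) // (yE i0 j1 k1) // (yE i0 j2 k2) // (yE i1 j2 k3) //= => <-; ring.
Qed.

End FourTermDecomposition.

(** * The decomposition locus of T23 *)

Lemma rank_le_sub_T23 lam a b c s :
  rank_le (tsub T23 (tscale lam (outer a b c))) s -> (3 <= s)%N.
Proof. by case/rank_le_sub_decomp=> A [B [Cf [decT _ _ _]]]; exact: decomp_T23_size decT. Qed.

Lemma psi_ver2_cubic3 (a : vec 2) (b : vec 3) (c : vec 4) ka g m1 n1 m2 n2 m3 n3 :
  (forall j, b j = ka * ver2 (a i0) (a i1) j) ->
  (forall k, c k = g * cubic3 m1 n1 m2 n2 m3 n3 k) ->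
  psi a b c = ka * g * (det2 m1 n1 (a i0) (a i1) * det2 m2 n2 (a i0) (a i1)
                        * det2 m3 n3 (a i0) (a i1)).
Proof.
move=> bE cE; rewrite -vdot_ver3_cubic3 /psi !eE !bE !cE /vdot sum4 /ver2 /ver3 /=.
ring.
Qed.

Lemma in_decomp_locus_T23 (a : vec 2) (b : vec 3) (c : vec 4) :
  (a i0 != 0) || (a i1 != 0) ->
  a i1 * b j1 = a i0 * b j2 -> a i1 * b j0 = a i0 * b j1 ->
  psi a b c != 0 -> Delta c != 0 -> in_decomp_locus T23 (outer a b c).
Proof.
move=> a_nz m12 m01 psin Dn.
have [ka bE] := minors_ver2 a_nz m12 m01.
have [g [m1 [n1 [m2 [n2 [m3 [n3 cE]]]]]]] := Delta_neq0_cubic3 Dn.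
move: Dn; rewrite (eq_Delta cE) Delta_cubic3 mulf_eq0 negb_or oppr_eq0 !expf_eq0 /=.
rewrite !mulf_eq0 !negb_or => /andP[gn /andP[/andP[d12 d13] d23]].
move: (psin); rewrite (psi_ver2_cubic3 bE cE) !mulf_eq0 !negb_or.
move=> /andP[/andP[kan _] /andP[/andP[d1 d2] d3]].
set a0 := a i0; set a1 := a i1 in bE d1 d2 d3 *.
exists (psi a b c)^-1, 4%N; split; first exact: has_rank_T23.
split=> //; split=> [|s /rank_le_sub_T23 //].
apply: (@rank_le3 _ (ver1 m1 n1) (ver2 m1 n1) (lagrange3 a0 a1 m2 n2 m3 n3 m1 n1)
                    (ver1 m2 n2) (ver2 m2 n2) (lagrange3 a0 a1 m1 n1 m3 n3 m2 n2)
                    (ver1 m3 n3) (ver2 m3 n3) (lagrange3 a0 a1 m1 n1 m2 n2 m3 n3)).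
move=> i j k; rewrite /tsub /tadd /tscale.
rewrite (T23_lagrange (det2C_neq0 d1) (det2C_neq0 d2) (det2C_neq0 d3) d12 d13 d23).
have -> : outer (ver1 a0 a1) (ver2 a0 a1) (lagrange3 m1 n1 m2 n2 m3 n3 a0 a1) i j k =
          (psi a b c)^-1 * outer a b c i j k.
  rewrite (psi_ver2_cubic3 bE cE) /outer bE cE (ver1E a i) /lagrange3.
  by field; rewrite kan gn d1 d2 d3.
ring.
Qed.

Lemma nonzero_vec2 (a : vec 2) : nonzero_vec a -> (a i0 != 0) || (a i1 != 0).
Proof. by case=> i; case: (ord2P i) => -> ->; rewrite ?orbT. Qed.

Theorem mainTheorem11 (a : vec 2) (b : vec 3) (c : vec 4) :
  nonzero_vec a -> nonzero_vec b -> nonzero_vec c ->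
  (in_decomp_locus T23 (outer a b c) <->
   [/\ b (e2 1) ^+ 2 - b (e2 0) * b (e2 2) = 0,
       a (e1 1) * b (e2 1) - a (e1 0) * b (e2 2) = 0,
       a (e1 1) * b (e2 0) - a (e1 0) * b (e2 1) = 0,
       psi a b c != 0 &
       Delta c != 0]).
Proof.
move=> /nonzero_vec2 a_nz _ _; rewrite !eE; split; last first.
  by case=> _ /subr0_eq m12 /subr0_eq m01; exact: in_decomp_locus_T23.
case=> lam [r [rkT [_]]]; rewrite (has_rank_T23_eq rkT) => -[decomp3 _].
have [A [B [Cf [decT A0 B0 C0]]]] := rank_le_sub_decomp decomp3.
case: (decomp_T23_first_term decT); rewrite A0 B0 C0 /= => m12 m01 psi1 Dn.
have lam_psi : lam * psi a b c = 1 by rewrite -psi1 /psi; ring.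
have lamn : lam != 0 by apply: contra_eq_neq lam_psi => ->; rewrite mul0r eq_sym oner_neq0.
have {}m12 : a i1 * b j1 = a i0 * b j2 by apply: (mulfI lamn); rewrite !mulrA.
have {}m01 : a i1 * b j0 = a i0 * b j1 by apply: (mulfI lamn); rewrite !mulrA.
have [ka bE] := minors_ver2 a_nz m12 m01.
split; rewrite ?m12 ?m01 ?subrr //.
- by rewrite !bE /ver2 /=; ring.
- by apply: contra_eq_neq lam_psi => ->; rewrite mulr0 eq_sym oner_neq0.
Qed.
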